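(* Let $\lambda$ be an infinite cardinal, $\theta$ an infinite regular cardinal and $\chi$ either $2$ or an infinite cardinal. Suppose that $m(\lambda,\lambda,\theta,\chi)=\lambda$. Then for every map $d:\lambda^+\times\lambda^+\to\lambda$, $A(d)\cap E^{\lambda^+}_\theta\in J_\chi[\lambda^+]$.
   Context: $E^\kappa_\theta=\{\alpha<\kappa\mid\mathrm{cf}(\alpha)=\theta\}$. For a map $d:\delta\times\kappa\to\lambda$, $A(d)$ is the set of all $\alpha<\kappa$ such that for every cofinal $B\subseteq\alpha$ there exist $\eta\in\delta\cap\alpha$ and a cofinal $B'\subseteq B$ on which $\beta\mapsto d(\eta,\beta)$ is injective. $m(\lambda,\lambda,\theta,\chi)$ is the least size of a family $\mathcal H$ of functions from $\lambda$ to $[\lambda]^{<\chi}$ such that for every $X\in[\lambda]^\theta$ and every $g:X\to\lambda$ there is $h\in\mathcal H$ with $|\{\xi\in X\mid g(\xi)\in h(\xi)\}|=\theta$. For regular uncountable $\kappa$, $J_\chi[\kappa]$ is the collection of all $S\subseteq\kappa$ for which there exist a club $C\subseteq\kappa$ and functions $f_i:\kappa\to[\kappa]^{<\chi}$ ($i<\kappa$) such that for every $\alpha\in S\cap C$, every regressive $f:\alpha\to\alpha$ and every cofinal $B\subseteq\alpha$, there is $i<\alpha$ with $\sup\{\beta\in B\mid f(\beta)\in f_i(\beta)\}=\alpha$. *)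

Set Implicit Arguments.

Definition le_card (A B : Type) : Prop :=
  exists f : A -> B, forall x y, f x = f y -> x = y.

Definition eq_card (A B : Type) : Prop :=
  exists f : A -> B, (forall x y, f x = f y -> x = y) /\ (forall y, exists x, f x = y).

Definition infinite (A : Type) : Prop := le_card nat A.

Definition strict_well_order {T : Type} (lt : T -> T -> Prop) : Prop :=
  well_founded lt /\
  (forall x y z, lt x y -> lt y z -> lt x z) /\
  (forall x, ~ lt x x) /\
  (forall x y, lt x y \/ x = y \/ lt y x).

Section Ord.
Context {K : Type} (lt : K -> K -> Prop).

Definition le x y := x = y \/ lt x y.

Definition cofinal_in (alpha : K) (B : K -> Prop) : Prop :=
  (forall b, B b -> lt b alpha) /\
  (forall g, lt g alpha -> exists b, B b /\ le g b).

Definition sup_eq (alpha : K) (X : K -> Prop) : Prop :=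
  (forall x, X x -> le x alpha) /\
  (forall d, lt d alpha -> exists x, X x /\ lt d x).

Definition cf_eq (alpha : K) (Theta : Type) : Prop :=
  (exists B, cofinal_in alpha B /\ eq_card {b | B b} Theta) /\
  (forall B, cofinal_in alpha B -> le_card Theta {b | B b}).

Definition is_zero (b : K) : Prop := forall g, ~ lt g b.

Definition regressive_on (alpha : K) (f : K -> K) : Prop :=
  forall b, lt b alpha -> lt (f b) alpha /\ (is_zero b \/ lt (f b) b).

Definition club (C : K -> Prop) : Prop :=
  (forall g, exists b, C b /\ le g b) /\
  (forall alpha, ~ is_zero alpha ->
     sup_eq alpha (fun b => C b /\ lt b alpha) -> C alpha).

Definition small_chi {T : Type} (Chi : Type) (S : T -> Prop) : Prop :=
  ~ le_card Chi {x | S x}.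

(* A(d) for d : K x K -> L  (here delta = kappa = K) *)
Definition in_A {L : Type} (d : K -> K -> L) (alpha : K) : Prop :=
  forall B, cofinal_in alpha B ->
    exists eta, lt eta alpha /\
      exists B', (forall b, B' b -> B b) /\ cofinal_in alpha B' /\
        (forall b1 b2, B' b1 -> B' b2 -> d eta b1 = d eta b2 -> b1 = b2).

Definition in_J (Chi : Type) (S : K -> Prop) : Prop :=
  exists C, club C /\
  exists F : K -> K -> (K -> Prop),
    (forall i b, small_chi Chi (F i b)) /\
    (forall alpha, S alpha -> C alpha ->
       forall f : K -> K, regressive_on alpha f ->
       forall B, cofinal_in alpha B ->
         exists i, lt i alpha /\
           sup_eq alpha (fun b => B b /\ F i b (f b))).
End Ord.

(* K (with lt) is the cardinal lambda^+ where lambda = |L| *)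
Definition is_succ_card (L K : Type) (lt : K -> K -> Prop) : Prop :=
  strict_well_order lt /\
  (forall a : K, le_card {b | lt b a} L) /\
  ~ le_card K L.

Definition regular_infinite_card (Theta : Type) (lt : Theta -> Theta -> Prop) : Prop :=
  infinite Theta /\ strict_well_order lt /\
  (forall a : Theta, ~ le_card Theta {b | lt b a}) /\
  (forall X : Theta -> Prop,
     (forall g, exists x, X x /\ (x = g \/ lt g x)) -> le_card Theta {x | X x}).

Definition chi_ok (Chi : Type) : Prop := eq_card Chi bool \/ infinite Chi.

(* H is a family witnessing the definition of m(lambda,lambda,theta,chi) *)
Definition m_good {L : Type} (Theta Chi : Type) (H : (L -> (L -> Prop)) -> Prop) : Prop :=
  (forall h, H h -> forall xi, small_chi Chi (h xi)) /\
  (forall (X : L -> Prop) (g : L -> L), eq_card {x | X x} Theta ->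
     exists h, H h /\ eq_card {xi | X xi /\ h xi (g xi)} Theta).

Definition m_eq_lambda (L Theta Chi : Type) : Prop :=
  (exists H : (L -> (L -> Prop)) -> Prop, m_good Theta Chi H /\ eq_card {h | H h} L) /\
  (forall H : (L -> (L -> Prop)) -> Prop, m_good Theta Chi H -> le_card L {h | H h}).

(* Write kappa = lambda^+.  Fix an injective pairing pi : kappa x lambda -> kappa, injections
   E_b : b -> lambda for b < kappa, and an enumeration (h_j)_(j < lambda) of a family witnessing
   m(lambda, lambda, theta, chi) = lambda.  The club is the set of closure points of pi, and
   f_(pi(eta, j))(b) is the set of x < b with E_b(x) in h_j(d(eta, b)), of size < chi.
   Given alpha in A(d) of cofinality theta in the club, a regressive f and a cofinal B, choose
   eta < alpha and a cofinal B' in B on which d(eta, -) is injective, and a theta-sequence in B'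
   that is eventually above every point below alpha.  Its image X under d(eta, -) has size theta
   and g(d(eta, b)) = E_b(f(b)) is well defined on X, so some h_j catches g on theta many terms,
   hence, theta being regular, on cofinally many; i = pi(eta, j) < alpha is then as required.
   The cardinal arithmetic rests on Hessenberg's |A x A| = |A| for infinite A, proved by Zorn's
   lemma: a maximal partial pairing D x D -> D has |D| = |A|, for otherwise D could be enlarged
   by a copy of itself taken from A \ D. *)

From mathcomp Require Import ssreflect ssrfun ssrbool eqtype.
From mathcomp Require Import boolp classical_sets functions cardinality.

Local Open Scope classical_set_scope.
Local Open Scope card_scope.

Lemma le_card_refl (A : Type) : le_card A A.
Proof. by exists id. Qed.

Lemma le_card_trans {A B C : Type} : le_card A B -> le_card B C -> le_card A C.
Proof. by move=> [f f_inj] [g g_inj]; exists (g \o f) => x y /g_inj /f_inj. Qed.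

Lemma le_card_prod {A A' B B' : Type} :
  le_card A A' -> le_card B B' -> le_card (A * B) (A' * B').
Proof.
move=> [f f_inj] [g g_inj]; exists (fun p => (f p.1, g p.2)).
by move=> [x1 x2] [y1 y2] [/f_inj -> /g_inj ->].
Qed.

Lemma le_card_of_inj_on {A B : Type} {P : A -> Prop} {Q : B -> Prop} {f : A -> B} :
  (forall x, P x -> Q (f x)) -> (forall x y, P x -> P y -> f x = f y -> x = y) ->
  le_card {x | P x} {y | Q y}.
Proof.
move=> fPQ f_inj; exists (fun x => exist _ (f (sval x)) (fPQ _ (svalP x))).
by move=> [x Px] [y Py] /(congr1 sval) /= /f_inj xy; apply: eq_exist; apply: xy.
Qed.

Lemma le_card_sig {A : Type} (P : A -> Prop) : le_card {x | P x} A.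
Proof. by exists sval => x y; apply: eq_sig_hprop. Qed.

Lemma le_card_preimage {A B : Type} {P : A -> Prop} {Q : B -> Prop} {f : A -> B} :
  (forall y, Q y -> exists x, P x /\ f x = y) -> le_card {y | Q y} {x | P x}.
Proof.
move=> fQ; have [g gQ] := choice (fun y : {y | Q y} => fQ _ (svalP y)).
exists (fun y => exist _ (g y) (gQ y).1) => y y' /(congr1 sval) /= gyy'.
by apply: eq_sig_hprop => //; rewrite -(gQ y).2 -(gQ y').2 gyy'.
Qed.

Lemma inj_on_of_le_card {A B : Type} {P : A -> Prop} {Q : B -> Prop} (b0 : B) :
  le_card {x | P x} {y | Q y} ->
  exists f : A -> B, (forall x, P x -> Q (f x)) /\
                     (forall x y, P x -> P y -> f x = f y -> x = y).
Proof.
move=> [f f_inj].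
exists (fun x => match pselect (P x) with left Px => sval (f (exist _ x Px)) | right _ => b0 end).
split=> [x|x y].
  by case: (pselect (P x)) => [Px _|nPx /nPx]; first exact: svalP.
case: (pselect (P x)) => [Px _|nPx /nPx //]; case: (pselect (P y)) => [Py _|nPy /nPy //].
move=> /(eq_sig_hprop (fun _ => @Prop_irrelevance _)) /f_inj.
by move=> /(congr1 sval).
Qed.

Lemma eq_card_le {A B : Type} : eq_card A B -> le_card A B.
Proof. by move=> [f [f_inj _]]; exists f. Qed.

Lemma eq_card_sym {A B : Type} : eq_card A B -> eq_card B A.
Proof.
move=> [f [f_inj f_surj]]; have [g fgK] := choice f_surj.
exists g; split=> [y y' gyy'|x]; first by rewrite -[y]fgK -[y']fgK gyy'.
by exists (f x); apply: f_inj; rewrite fgK.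
Qed.

Lemma card_le_setT {A B : Type} : le_card A B -> [set: A] #<= [set: B].
Proof.
case=> f f_inj; apply/card_leP/injfunPex.
exists (fun x : [set: A] => (exist _ (f (sval x)) (mem_set I) : [set: B])) => //.
by move=> [x ?] [y ?] _ _ /(congr1 sval) /= /f_inj xy; apply/eq_exist.
Qed.

Lemma eq_card_setT {A B : Type} : [set: A] #= [set: B] -> eq_card A B.
Proof.
case/card_bijP=> f [g fK gK].
exists (fun x => sval (f (exist _ x (mem_set I)))); split.
- move=> x y /(eq_sig_hprop (fun _ => @bool_irrelevance _)) /(congr1 g).
  by rewrite !fK => /(congr1 sval).
- move=> y; exists (sval (g (exist _ y (mem_set I)))).
  case: (g _) (gK (exist _ y (mem_set I))) => x /= xT.
  by rewrite (bool_irrelevance xT (mem_set I)) => ->.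
Qed.

Lemma le_card_antisym {A B : Type} : le_card A B -> le_card B A -> eq_card A B.
Proof.
by move=> /card_le_setT AB /card_le_setT BA; apply/eq_card_setT/Cantor_Bernstein.
Qed.

Lemma bigcup_chain_common {U : Type} {F : set (set U)} {a b : U} :
  total_on F subset -> (\bigcup_(X in F) X) a -> (\bigcup_(X in F) X) b ->
  exists2 X, F X & X a /\ X b.
Proof.
move=> F_tot [X FX Xa] [Y FY Yb].
by case: (F_tot X Y FX FY) => [XY|YX]; [exists Y | exists X] => //; split=> //;
  [apply: XY | apply: YX].
Qed.

Lemma le_card_total (A B : Type) : le_card A B \/ le_card B A.
Proof.
pose partial_inj (S : set (A * B)) :=
  (forall x y y', S (x, y) -> S (x, y') -> y = y') /\
  (forall x x' y, S (x, y) -> S (x', y) -> x = x').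
have [S [[S_fun S_inj] S_max]] : exists S, partial_inj S /\ forall S', S `<` S' -> ~ partial_inj S'.
  apply: Zorn_bigcup => F F_inj F_tot; split.
  - move=> x y y' Sxy Sxy'; have [X FX [Xxy Xxy']] := bigcup_chain_common F_tot Sxy Sxy'.
    exact: (F_inj X FX).1 Xxy Xxy'.
  - move=> x x' y Sxy Sx'y; have [X FX [Xxy Xx'y]] := bigcup_chain_common F_tot Sxy Sx'y.
    exact: (F_inj X FX).2 Xxy Xx'y.
have [S_total|/existsNP[x0 /forallNP Sx0]] := pselect (forall x, exists y, S (x, y)); last first.
  have [S_onto|/existsNP[y0 /forallNP Sy0]] := pselect (forall y, exists x, S (x, y)); last first.
    have S_fresh x y : S (x, y) -> x <> x0 /\ y <> y0.
      by move=> Sxy; split=> [ex|ey]; [apply: (Sx0 y)|apply: (Sy0 x)]; rewrite -?ex -?ey.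
    exfalso; apply: (S_max (S `|` [set (x0, y0)])).
    - split=> [?|]; first by left.
      by move=> /(_ (x0, y0) (or_intror erefl)); apply: Sx0.
    - split.
      + move=> x y y' [Sxy|[ex ey]] [Sxy'|[ex' ey']].
        * exact: S_fun Sxy Sxy'.
        * by case: (S_fresh _ _ Sxy).
        * by case: (S_fresh _ _ Sxy').
        * by rewrite ey ey'.
      + move=> x x' y [Sxy|[ex ey]] [Sx'y|[ex' ey']].
        * exact: S_inj Sxy Sx'y.
        * by case: (S_fresh _ _ Sxy).
        * by case: (S_fresh _ _ Sx'y).
        * by rewrite ex ex'.
  have [g Sg] := choice S_onto; right; exists g => y y' gyy'.
  by apply: (S_fun (g y)); rewrite // gyy'.
have [f Sf] := choice S_total; left; exists f => x x' fxx'.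
by apply: (S_inj _ _ (f x)); rewrite // fxx'.
Qed.

Section Hessenberg.
Context {T : Type}.

(* A partial pairing is a single set: [inl x] puts x in its domain, [inr (x, y, z)] sends
   (x, y) to z. *)
Definition pairing_graph (D : set T) (p : T -> T -> T) : set (T + T * T * T) :=
  fun s => match s with
  | inl x => D x
  | inr (x, y, z) => [/\ D x, D y & z = p x y]
  end.

Definition is_pairing (D : set T) (p : T -> T -> T) :=
  (forall x y, D x -> D y -> D (p x y)) /\
  (forall x y x' y', D x -> D y -> D x' -> D y' -> p x y = p x' y' -> x = x' /\ y = y').

Definition partial_pairing (S : set (T + T * T * T)) :=
  [/\ forall x y z z', S (inr (x, y, z)) -> S (inr (x, y, z')) -> z = z',
      forall x y x' y' z, S (inr (x, y, z)) -> S (inr (x', y', z)) -> x = x' /\ y = y',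
      forall x y z, S (inr (x, y, z)) -> [/\ S (inl x), S (inl y) & S (inl z)] &
      forall x y, S (inl x) -> S (inl y) -> exists z, S (inr (x, y, z))].

Lemma partial_pairing_bigcup (F : set (set (T + T * T * T))) :
  F `<=` partial_pairing -> total_on F subset -> partial_pairing (\bigcup_(X in F) X).
Proof.
move=> F_pp F_tot; split.
- move=> x y z z' Sz Sz'; have [X FX [Xz Xz']] := bigcup_chain_common F_tot Sz Sz'.
  by case: (F_pp X FX) => X_fun _ _ _; apply: X_fun Xz Xz'.
- move=> x y x' y' z Sz Sz'; have [X FX [Xz Xz']] := bigcup_chain_common F_tot Sz Sz'.
  by case: (F_pp X FX) => _ X_inj _ _; apply: X_inj Xz Xz'.
- move=> x y z [X FX Xz]; case: (F_pp X FX) => _ _ /(_ _ _ _ Xz) [Xx Xy Xz'] _.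
  by split; exists X.
- move=> x y Sx Sy; have [X FX [Xx Xy]] := bigcup_chain_common F_tot Sx Sy.
  by case: (F_pp X FX) => _ _ _ /(_ _ _ Xx Xy) [z Xz]; exists z, X.
Qed.

Lemma partial_pairing_graph {D : set T} {p : T -> T -> T} :
  is_pairing D p -> partial_pairing (pairing_graph D p).
Proof.
move=> [p_dom p_inj]; split=> /=.
- by move=> x y z z' [_ _ ->] [_ _ ->].
- by move=> x y x' y' z [Dx Dy ->] [Dx' Dy' /p_inj]; apply.
- by move=> x y z [Dx Dy ->]; split=> //; apply: p_dom.
- by move=> x y Dx Dy; exists (p x y).
Qed.

Lemma partial_pairingP {S : set (T + T * T * T)} : partial_pairing S ->
  exists p, is_pairing (fun x => S (inl x)) p /\ S = pairing_graph (fun x => S (inl x)) p.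
Proof.
move=> [S_fun S_inj S_dom S_tot].
have S_tot' x y : exists z, S (inl x) -> S (inl y) -> S (inr (x, y, z)).
  have [[Sx Sy]|nS] := pselect (S (inl x) /\ S (inl y)); last by exists x => Sx Sy; case: nS.
  by have [z Sz] := S_tot x y Sx Sy; exists z.
have [p' Sp'] := choice (fun xy : T * T => S_tot' xy.1 xy.2).
pose p x y := p' (x, y); have Sp x y : S (inl x) -> S (inl y) -> S (inr (x, y, p x y)).
  exact: (Sp' (x, y)).
exists p; split; first split.
- by move=> x y Sx Sy; case: (S_dom _ _ _ (Sp x y Sx Sy)).
- move=> x y x' y' Sx Sy Sx' Sy' pxy; apply: (S_inj _ _ _ _ (p x y)) (Sp x y Sx Sy) _.
  by rewrite pxy; apply: Sp.
apply/funext => -[x|[[x y] z]] /=; apply/propext; split=> //.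
- by move=> Sz; case: (S_dom _ _ _ Sz) => Sx Sy _; split=> //; apply: S_fun Sz (Sp _ _ Sx Sy).
- by move=> [Sx Sy ->]; apply: Sp.
Qed.

Lemma is_pairing_extend {D : set T} {p : T -> T -> T} {e0 e1 : T} {k : T -> T} :
  is_pairing D p -> D e0 -> D e1 -> e0 <> e1 ->
  (forall x y, D x -> D y -> k x = k y -> x = y) -> (forall x, D x -> ~ D (k x)) ->
  exists q, is_pairing (D `|` k @` D) q /\ forall x y, D x -> D y -> q x y = p x y.
Proof.
move=> [p_dom p_inj] De0 De1 e01 k_inj k_out.
have base_ex x : exists v, (k @` D) x -> D v /\ k v = x.
  have [[v Dv kv]|nx] := pselect ((k @` D) x); first by exists v.
  by exists x => /nx.
have [base baseP] := choice base_ex.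
(* A point x of D u k(D) is determined by [code x] in D and [tag x] in {e0, e1}; new pairs are
   sent injectively into k(D) through p. *)
pose tag x := if pselect (D x) then e0 else e1.
pose code x := if pselect (D x) then x else base x.
have tag_dom x : D (tag x) by rewrite /tag; case: pselect.
have code_dom x : (D `|` k @` D) x -> D (code x).
  by rewrite /code; case: pselect => //= nx [//|/baseP []].
have decode x x' : (D `|` k @` D) x -> (D `|` k @` D) x' ->
    code x = code x' -> tag x = tag x' -> x = x'.
  rewrite /code /tag; case: pselect => /= Dx; case: pselect => /= Dx'.
  - by move=> _ _ ->.
  - by move=> _ _ _ /e01.
  - by move=> _ _ _ /esym/e01.
  - by move=> [//|/baseP [_ kx]] [//|/baseP [_ kx']] bxx' _; rewrite -kx -kx' bxx'.
have inner_dom x y : (D `|` k @` D) x -> (D `|` k @` D) y ->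
    D (p (p (code x) (code y)) (p (tag x) (tag y))).
  by move=> D'x D'y; apply: p_dom (p_dom _ _ _ _) (p_dom _ _ _ _); auto.
exists (fun x y => if pselect (D x /\ D y) then p x y
                   else k (p (p (code x) (code y)) (p (tag x) (tag y)))).
split; last by move=> x y Dx Dy; case: (pselect (D x /\ D y)) => // -[].
split=> [x y D'x D'y|x y x' y' D'x D'y D'x' D'y'].
  case: (pselect (D x /\ D y)) => /= [[Dx Dy]|_]; first by left; apply: p_dom.
  by right; exists (p (p (code x) (code y)) (p (tag x) (tag y))) => //; apply: inner_dom.
case: (pselect (D x /\ D y)) => /= [[Dx Dy]|nxy];
  case: (pselect (D x' /\ D y')) => /= [[Dx' Dy']|nxy'].
- exact: p_inj.
- move=> pk; case: (k_out _ (inner_dom x' y' D'x' D'y')).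
  by rewrite -pk; apply: p_dom.
- move=> kp; case: (k_out _ (inner_dom x y D'x D'y)).
  by rewrite kp; apply: p_dom.
- move=> /(k_inj _ _ (inner_dom _ _ D'x D'y) (inner_dom _ _ D'x' D'y')).
  have [Dcx Dcy Dcx' Dcy'] := And4 (code_dom _ D'x) (code_dom _ D'y)
                                  (code_dom _ D'x') (code_dom _ D'y').
  case/(p_inj _ _ _ _ (p_dom _ _ Dcx Dcy) (p_dom _ _ (tag_dom x) (tag_dom y))
                      (p_dom _ _ Dcx' Dcy') (p_dom _ _ (tag_dom x') (tag_dom y'))).
  move=> /(p_inj _ _ _ _ Dcx Dcy Dcx' Dcy') [cx cy].
  move=> /(p_inj _ _ _ _ (tag_dom x) (tag_dom y) (tag_dom x') (tag_dom y')) [tx ty].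
  by split; apply: decode.
Qed.

Lemma partial_pairing_zorn {S0 : set (T + T * T * T)} : partial_pairing S0 ->
  exists S, [/\ partial_pairing S, S0 `<=` S &
                forall S', partial_pairing S' -> S `<=` S' -> S' `<=` S].
Proof.
move=> S0_pp.
have [S [[S_pp S0S] S_max]] : exists S, (partial_pairing S /\ (S = set0 \/ S0 `<=` S)) /\
    forall S', S `<` S' -> ~ (partial_pairing S' /\ (S' = set0 \/ S0 `<=` S')).
  apply: Zorn_bigcup => F FP F_tot; split.
    by apply: partial_pairing_bigcup => // X /FP [].
  have [[X FX S0X]|noS0] := pselect (exists2 X, F X & S0 `<=` X).
    by right=> s S0s; exists X => //; apply: S0X.
  left; apply/seteqP; split=> // s [X FX Xs]; case: (FP X FX) => _ [X0|S0X].
    by move: Xs; rewrite X0.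
  by case: noS0; exists X.
have S0S' : S0 `<=` S.
  have [//|nS0S] := pselect (S0 `<=` S).
  case: S0S => // S_0; case: (S_max S0); last by split=> //; right.
  by split=> //; rewrite S_0; apply: sub0set.
exists S; split=> // S' S'_pp SS'; have [//|nS'S] := pselect (S' `<=` S).
by case: (S_max S') => //; split=> //; right; apply: subset_trans SS'.
Qed.

Lemma le_card_square_of_pairing {D : set T} {p : T -> T -> T} {e0 e1 : T} :
  is_pairing D p -> D e0 -> D e1 -> e0 <> e1 -> le_card {x | ~ D x} {x | D x} ->
  le_card (T * T) T.
Proof.
move=> [p_dom p_inj] De0 De1 e01 /(inj_on_of_le_card e0) [r [r_dom r_inj]].
pose m x := if pselect (D x) then p x e0 else p (r x) e1.
have m_dom x : D (m x) by rewrite /m; case: pselect => Dx; apply: p_dom; auto.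
have m_inj x y : m x = m y -> x = y.
  rewrite /m; case: pselect => /= Dx; case: pselect => /= Dy.
  - by case/p_inj.
  - by case/p_inj; auto.
  - by case/p_inj; auto => _ /esym.
  - by case/p_inj; auto => /r_inj; apply.
exists (fun xy => p (m xy.1) (m xy.2)) => -[x y] [x' y'] /p_inj /=.
by case=> // /m_inj -> /m_inj ->.
Qed.

Lemma le_card_square : infinite T -> le_card (T * T) T.
Proof.
move=> [e e_inj]; have [pr pr_inj] := eq_card_le (eq_card_setT card_nat2).
have einv_ex x : exists n, range e x -> e n = x.
  by case: (pselect (range e x)) => [[n _ <-]|nx]; [exists n | exists 0 => /nx].
have [einv einvK] := choice einv_ex.
pose p0 x y := e (pr (einv x, einv y)).
have p0_pairing : is_pairing (range e) p0.
  split=> [x y _ _|x y x' y' ex ey ex' ey']; first by exists (pr (einv x, einv y)).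
  move=> /e_inj /pr_inj [exx' eyy'].
  by rewrite -(einvK x ex) -(einvK x' ex') -(einvK y ey) -(einvK y' ey') exx' eyy'.
(* Starting above a countable pairing puts e 0 <> e 1 in the maximal domain. *)
have [S [S_pp S0S S_max]] := partial_pairing_zorn (partial_pairing_graph p0_pairing).
have [p [p_pair Sp]] := partial_pairingP S_pp.
set D := fun x => S (inl x) in p_pair Sp.
have De n : D (e n) by apply: (S0S (inl (e n))); exists n.
have e01 : e 0 <> e 1 by move=> /e_inj.
have [|D_large] := le_card_total {x | D x} {x | ~ D x}; last first.
  exact: le_card_square_of_pairing p_pair (De 0) (De 1) e01 D_large.
move=> /(inj_on_of_le_card (e 0)) [k [k_out k_inj]].
have [q [q_pair qp]] := is_pairing_extend p_pair (De 0) (De 1) e01 k_inj k_out.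
have SS' : S `<=` pairing_graph (D `|` k @` D) q.
  rewrite Sp => -[x|[[x y] z]] /=; first by left.
  by case=> Dx Dy ->; split; [left|left|rewrite qp].
case: (k_out _ (De 0)); apply: (S_max _ (partial_pairing_graph q_pair) SS' (inl (k (e 0)))).
by right; exists (e 0).
Qed.
End Hessenberg.

Lemma le_card_option {A L : Type} : infinite L -> le_card A L -> le_card (option A) L.
Proof.
move=> L_inf [f f_inj]; have [p p_inj] := le_card_square L_inf.
have [e e_inj] := L_inf; have e01 : e 0 <> e 1 by move=> /e_inj.
exists (fun o => if o is Some x then p (f x, e 1) else p (e 0, e 0)).
move=> [x|] [y|] // /p_inj [].
- by move=> /f_inj ->.
- by move=> _ /esym /e01.
- by move=> _ /e01.
Qed.

Lemma not_le_card_singleton {A T : Type} (t : T) : infinite A -> ~ le_card A {x | x = t}.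
Proof.
move=> [e e_inj] [m m_inj]; have /m_inj /e_inj // : m (e 0) = m (e 1).
by apply: eq_sig_hprop => //; rewrite (svalP (m (e 0))) (svalP (m (e 1))).
Qed.

Section StrictWellOrder.
Context {K : Type} {lt : K -> K -> Prop} (lt_wo : strict_well_order lt).

Lemma swo_trans {x y z} : lt x y -> lt y z -> lt x z.
Proof. by case: lt_wo => _ [+ _]; apply. Qed.

Lemma swo_le_of_not_lt {x y} : ~ lt y x -> le lt x y.
Proof. by case: lt_wo => _ [_ [_ /(_ x y)]] [xy|[xy|yx]] nyx; [right|left|]. Qed.

Lemma swo_lt_le_trans {x y z} : lt x y -> le lt y z -> lt x z.
Proof. by move=> xy [<-|]; last exact: swo_trans. Qed.

Lemma swo_le_lt_trans {x y z} : le lt x y -> lt y z -> lt x z.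
Proof. by move=> [->|] //; exact: swo_trans. Qed.

Lemma swo_min {P : K -> Prop} : (exists x, P x) -> exists x, P x /\ forall y, P y -> ~ lt y x.
Proof.
case: lt_wo => wf _ [x Px]; elim: (wf x) Px => {}x _ IH Px.
have [[y [Py yx]]|no_lower] := pselect (exists y, P y /\ lt y x); first exact: IH yx Py.
by exists x; split=> // y Py yx; apply: no_lower; exists y.
Qed.
End StrictWellOrder.

Section Cofinality.
Context {K : Type} {ltK : K -> K -> Prop} {Theta : Type} {ltT : Theta -> Theta -> Prop}.
Context (K_wo : strict_well_order ltK) (Theta_reg : regular_infinite_card ltT).

Let Theta_wo : strict_well_order ltT := Theta_reg.2.1.

Lemma regular_no_max (t : Theta) : exists t', ltT t t'.
Proof.
have [Theta_inf [_ [_ Theta_cof]]] := Theta_reg.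
apply: contrapT => /forallNP t_max; apply: (not_le_card_singleton t Theta_inf).
apply: Theta_cof => g; exists t; split=> //.
by case: (swo_le_of_not_lt Theta_wo (t_max g)) => [->|gt]; [left|right].
Qed.

Lemma regular_unbounded {Y : Theta -> Prop} :
  le_card Theta {t | Y t} -> forall s, exists t, Y t /\ le ltT s t.
Proof.
move=> Y_big s; apply: contrapT => /forallNP Y_bounded.
apply: (Theta_reg.2.2.1 s); apply: le_card_trans Y_big (le_card_of_inj_on (f := id) _ _) => //.
move=> t Yt; apply: contrapT => /(swo_le_of_not_lt Theta_wo) st.
by apply: (Y_bounded t).
Qed.

Lemma cf_bounded {a : K} {I : Type} {c : I -> K} :
  cf_eq ltK a Theta -> ~ le_card Theta I -> (forall i, ltK (c i) a) ->
  exists g, ltK g a /\ forall i, ltK (c i) g.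
Proof.
move=> [_ a_cf] I_small ca; apply: contrapT => /forallNP unbounded; apply: I_small.
have cofinal : cofinal_in ltK a (fun x => exists i, c i = x).
  split=> [_ [i <-] //|g ga].
  have /existsNP [i /(swo_le_of_not_lt K_wo) gi] : ~ forall i, ltK (c i) g.
    by move=> cg; apply: (unbounded g).
  by exists (c i); split=> //; exists i.
apply: le_card_trans (a_cf _ cofinal) _; apply: le_card_trans (le_card_sig (fun _ : I => True)).
by apply: (le_card_preimage (f := c)) => _ [i <-]; exists i.
Qed.

Lemma cofinal_sequence {a : K} {B : K -> Prop} :
  cf_eq ltK a Theta -> cofinal_in ltK a B ->
  exists f : Theta -> K, (forall t, B (f t)) /\
    forall g, ltK g a -> exists s, forall t, le ltT s t -> ltK g (f t).
Proof.
move=> a_cf [Ba B_cof]; have [[B0 [[B0a B0_cof] /eq_card_sym [c' [_ c'_onto]]]] _] := a_cf.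
pose c t := sval (c' t).
have f_ex t : exists b, B b /\ forall s, le ltT s t -> ltK (c s) b.
  have small : ~ le_card Theta {s | le ltT s t}.
    have [t' tt'] := regular_no_max t; move=> small; apply: (Theta_reg.2.2.1 t').
    apply: le_card_trans small (le_card_of_inj_on (f := id) _ _) => // s st.
    exact: (swo_le_lt_trans Theta_wo st tt').
  have [g [ga cg]] := cf_bounded (c := fun s : {s | le ltT s t} => c (sval s)) a_cf small
    (fun s => B0a _ (svalP (c' (sval s)))).
  have [b [Bb gb]] := B_cof g ga.
  by exists b; split=> // s st; exact: (swo_lt_le_trans K_wo (cg (exist _ s st)) gb).
have [f fP] := choice f_ex; exists f; split=> [t|g ga]; first exact: (fP t).1.
have [b0 [B0b0 gb0]] := B0_cof g ga; have [s cs] := c'_onto (exist _ b0 B0b0).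
have gcs : le ltK g (c s) by rewrite /c cs.
by exists s => t st; exact: (swo_le_lt_trans K_wo gcs ((fP t).2 s st)).
Qed.

Lemma cover_on_cofinal {L : Type} {H : (L -> L -> Prop) -> Prop} {a : K} {B : K -> Prop}
    {phi : K -> L} (G : K -> L) :
  (forall (X : L -> Prop) (g : L -> L), eq_card {x | X x} Theta ->
     exists h, H h /\ eq_card {xi | X xi /\ h xi (g xi)} Theta) ->
  cf_eq ltK a Theta -> cofinal_in ltK a B ->
  (forall b b', B b -> B b' -> phi b = phi b' -> b = b') ->
  exists h, H h /\ forall g, ltK g a -> exists b, [/\ B b, ltK g b & h (phi b) (G b)].
Proof.
move=> H_cover a_cf B_cof phi_inj.
have [f [fB f_unbounded]] := cofinal_sequence a_cf B_cof.
pose X xi := exists t, phi (f t) = xi.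
have gX_ex xi : exists y, forall t, phi (f t) = xi -> y = G (f t).
  have [[t ft]|nX] := pselect (X xi); last by exists xi => t ft; case: nX; exists t.
  by exists (G (f t)) => t' ft'; rewrite (phi_inj (f t') (f t)) // ft ft'.
have [gX gXP] := choice gX_ex.
have X_card : eq_card {xi | X xi} Theta.
  apply: le_card_antisym.
    apply: le_card_trans (le_card_sig (fun _ : Theta => True)).
    by apply: (le_card_preimage (f := phi \o f)) => _ [t <-]; exists t.
  apply: le_card_trans (a_cf.2 (fun b => exists t, f t = b) _) _.
    split=> [_ [t <-]|g ga]; first exact: B_cof.1.
    have [s fs] := f_unbounded g ga; exists (f s); split; first by exists s.
    by right; apply: fs; left.
  apply: (le_card_of_inj_on (f := phi)) => [_ [t <-]|_ _ [t <-] [t' <-]]; first by exists t.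
  exact: phi_inj.
have [h [Hh Y_card]] := H_cover X gX X_card.
exists h; split=> // g ga; have [s fs] := f_unbounded g ga.
have [|t [ht st]] := regular_unbounded (Y := fun t => h (phi (f t)) (gX (phi (f t)))) _ s.
  apply: le_card_trans (eq_card_le (eq_card_sym Y_card)) _.
  by apply: (le_card_preimage (f := phi \o f)) => _ [[t <-] ht]; exists t.
by exists (f t); split; [exact: fB|exact: fs|rewrite -(gXP _ t erefl)].
Qed.
End Cofinality.

Section SuccessorCardinal.
Context {L K : Type} {ltK : K -> K -> Prop}.
Context (L_inf : infinite L) (K_succ : is_succ_card L ltK).

Let K_wo : strict_well_order ltK := K_succ.1.
Let K_seg : forall a, le_card {b | ltK b a} L := K_succ.2.1.

Lemma le_card_L_K : le_card L K.
Proof. by case: (le_card_total L K) => // KL; case: K_succ.2.2. Qed.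

Lemma segment_code : exists E : K -> K -> L,
  forall b x y, ltK x b -> ltK y b -> E b x = E b y -> x = y.
Proof.
have [l0 _] := L_inf.
have E_ex b : exists Eb : K -> L, forall x y, ltK x b -> ltK y b -> Eb x = Eb y -> x = y.
  have L_sig : le_card L {l : L | True} by exists (fun l => exist _ l I) => x y [].
  have [Eb [_ Eb_inj]] := inj_on_of_le_card (l0 0) (le_card_trans (K_seg b) L_sig).
  by exists Eb.
by have [E EP] := choice E_ex; exists E.
Qed.

Lemma succ_bounded {A : Type} : le_card A L -> forall s : A -> K, exists u, forall a, ltK (s a) u.
Proof.
move=> AL s; apply: contrapT => /forallNP unbounded; apply: K_succ.2.2.
have above u : exists a, le ltK u (s a).
  by have /existsNP [a /(swo_le_of_not_lt K_wo)] := unbounded u; exists a.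
have [au au_le] := choice above; have [E E_inj] := segment_code.
pose code u := (au u, if pselect (u = s (au u)) then None else Some (E (s (au u)) u)).
apply: le_card_trans (le_card_trans (le_card_prod AL (le_card_option L_inf (le_card_refl L)))
                                     (le_card_square L_inf)).
exists code => u u' [au_eq]; have := au_le u'; have := au_le u; rewrite -au_eq.
move: (au u) => a u_le u'_le.
case: (pselect (u = s a)) => /= [us|nus]; case: (pselect (u' = s a)) => /= [u's|nu's] //.
- by rewrite us u's.
- by case=> /E_inj; apply; [case: u_le => // /nus | case: u'_le => // /nu's].
Qed.

Lemma closure_club (g : K -> L -> K) :
  club ltK (fun a => forall x j, ltK x a -> ltK (g x j) a).
Proof.
have next_ex x : exists u, ltK x u /\ forall y j, le ltK y x -> ltK (g y j) u.
  have A_L : le_card (option (option {y | ltK y x} * L)) L.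
    apply: (le_card_option L_inf); apply: (le_card_trans _ (le_card_square L_inf)).
    exact: (le_card_prod (le_card_option L_inf (K_seg x)) (le_card_refl L)).
  have [u u_above] := succ_bounded A_L (fun o => match o with
    | None => x | Some (None, j) => g x j | Some (Some y, j) => g (sval y) j end).
  exists u; split=> [|y j [->|yx]]; first exact: (u_above None).
    exact: (u_above (Some (None, j))).
  exact: (u_above (Some (Some (exist _ y yx), j))).
have [next nextP] := choice next_ex.
split=> [x|a _ [_ a_sup] y j ya]; last first.
  have [z [[z_closed za] yz]] := a_sup y ya.
  exact: (swo_trans K_wo (z_closed _ _ yz) za).
pose iterates n := Nat.iter n next x.
have [u u_above] := succ_bounded L_inf iterates.
have [a [a_above a_min]] :=
  swo_min K_wo (ex_intro (fun a => forall n, ltK (iterates n) a) u u_above).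
exists a; split; last by right; apply: (a_above 0).
move=> y j ya.
have /existsNP [n /(swo_le_of_not_lt K_wo) yn] : ~ forall n, ltK (iterates n) y.
  by move=> y_above; apply: (a_min y).
exact: (swo_trans K_wo ((nextP (iterates n)).2 y j yn) (a_above (S n))).
Qed.

Lemma pairing_K_L : exists pi : K -> L -> K,
  forall x j x' j', pi x j = pi x' j' -> x = x' /\ j = j'.
Proof.
have [p p_inj] := le_card_trans (le_card_prod (le_card_refl K) le_card_L_K)
                                (le_card_square (le_card_trans L_inf le_card_L_K)).
by exists (fun x j => p (x, j)) => x j x' j' /p_inj [-> ->].
Qed.
End SuccessorCardinal.

Section Catching.
Context {L K : Type} (ltK : K -> K -> Prop) (pi : K -> L -> K) (E : K -> K -> L)
        (hs : L -> L -> L -> Prop) (d : K -> K -> L).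

(* The sets f_i(b) of the definition of J_chi, the index i coding a pair (eta, j) through pi. *)
Definition caught (i b x : K) : Prop :=
  exists eta j, [/\ pi eta j = i, ltK x b & hs j (d eta b) (E b x)].

Lemma caught_small (Chi : Type) :
  (forall x j x' j', pi x j = pi x' j' -> x = x' /\ j = j') ->
  (forall b x y, ltK x b -> ltK y b -> E b x = E b y -> x = y) ->
  (forall j xi, small_chi Chi (hs j xi)) -> inhabited Chi ->
  forall i b, small_chi Chi (caught i b).
Proof.
move=> pi_inj E_inj hs_small [c0] i b Chi_le.
have [x [eta [j [pij _ _]]]] : exists x, caught i b x.
  by case: Chi_le => m _; exists (sval (m c0)); apply: svalP.
apply: (hs_small j (d eta b)); apply: (le_card_trans Chi_le).
apply: (le_card_of_inj_on (f := E b)).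
  by move=> y [eta' [j' [pij' _ hy]]]; move: pij'; rewrite -pij => /pi_inj [<- <-].
by move=> y y' [? [? [_ yb _]]] [? [? [_ y'b _]]]; apply: E_inj.
Qed.
End Catching.

Theorem lemma3p5 (L K : Type) (ltK : K -> K -> Prop)
  (Theta : Type) (ltT : Theta -> Theta -> Prop) (Chi : Type) :
  infinite L ->
  is_succ_card L ltK ->
  regular_infinite_card ltT ->
  chi_ok Chi ->
  m_eq_lambda L Theta Chi ->
  forall d : K -> K -> L,
    in_J ltK Chi (fun alpha => in_A ltK d alpha /\ cf_eq ltK alpha Theta).
Proof.
move=> L_inf K_succ Theta_reg Chi_ok [[H [[H_small H_cover] /eq_card_sym [hs' [_ hs'_onto]]]] _] d.
pose hs j := sval (hs' j).
have [pi pi_inj] := pairing_K_L L_inf K_succ.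
have [E E_inj] := segment_code L_inf K_succ.
have Chi_inh : inhabited Chi.
  case: Chi_ok => [[f [_ /(_ true) [c _]]]|[e _]]; [exact: inhabits c|exact: inhabits (e 0)].
exists (fun a => forall x j, ltK x a -> ltK (pi x j) a); split; first exact: closure_club.
exists (caught ltK pi E hs d); split.
  by apply: caught_small => // j; apply: H_small; apply: svalP.
move=> a [a_A a_cf] a_closed f f_reg B B_cof.
have [eta [eta_a [B' [B'B [B'_cof B'_inj]]]]] := a_A B B_cof.
have [h [Hh h_catch]] := cover_on_cofinal K_succ.1 Theta_reg (fun b => E b (f b))
  H_cover a_cf B'_cof B'_inj.
have [j hj] := hs'_onto (exist _ h Hh).
exists (pi eta j); split; first exact: a_closed _ _ eta_a.
split=> [b [Bb _]|g ga]; first by right; apply: B_cof.1.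
have [b [B'b gb hb]] := h_catch g ga; have ba := B'_cof.1 b B'b.
exists b; split=> //; split; first exact: B'B.
exists eta, j; split=> //; first by case: (f_reg b ba) => _ [/(_ g gb)|].
by rewrite /hs hj.
Qed.
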